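(* Let $K$ be a field of characteristic $0$ and let $f\in K[x_1,\ldots,x_n]$ be a homogeneous polynomial of degree $d$. The following two properties are equivalent: (i) $f$ is a monomial (times a nonzero constant) which depends on all of its $n$ variables; (ii) the Lie algebra $\mathfrak{g}_f$ is an $(n-1)$-dimensional subspace of the space of diagonal $n\times n$ matrices.
   Context: For $P\in K[x_1,\ldots,x_n]$, the Lie algebra $\mathfrak{g}_P$ of $P$ is the Lie algebra (tangent space at the identity) of the group of invariants $\{A\in GL_n(K): P(A.x)=P(x)\}$; equivalently, $\mathfrak{g}_P$ is the linear subspace of matrices $A=(a_{ij})\in M_n(K)$ such that $\sum_{i,j\in[n]} a_{ij}\,x_j\,\frac{\partial P}{\partial x_i}=0$. *)

From HB Require Import structures.
From mathcomp Require Import all_boot all_order all_algebra.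
From mathcomp Require Import mpoly.
Set Implicit Arguments. Unset Strict Implicit. Unset Printing Implicit Defensive.
Import GRing.Theory.
Local Open Scope ring_scope.

Definition in_lie_alg (K : fieldType) (n : nat) (P : {mpoly K[n]}) (A : 'M[K]_n) : Prop :=
  \sum_(i < n) \sum_(j < n) A i j *: ('X_j * mderiv i P) = 0.

Definition full_monomial (K : fieldType) (n : nat) (P : {mpoly K[n]}) : Prop :=
  exists (c : K) (m : 'X_{1..n}), c != 0 /\ (forall i : 'I_n, (0 < m i)%N) /\ P = c *: 'X_[m].

Definition lie_alg_diag_codim1 (K : fieldType) (n : nat) (P : {mpoly K[n]}) : Prop :=
  exists V : {vspace 'M[K]_n},
    (forall A : 'M[K]_n, A \in V <-> in_lie_alg P A) /\
    \dim V = n.-1 /\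
    (forall A : 'M[K]_n, A \in V -> is_diag_mx A).

From HB Require Import structures.
From mathcomp Require Import all_boot all_order all_algebra.
From mathcomp Require Import mpoly.
From mathcomp Require Import zify.
Import GRing.Theory.
Local Open Scope ring_scope.

(* For a diagonal matrix [diag d], the coefficient of [x^b] in
   [sum_ij a_ij x_j d_i f] is [(sum_i d_i b_i) f_b], so the diagonal part of
   g_f is cut out by the linear forms [d |-> sum_i d_i b_i], one for each
   monomial [x^b] of [f].  For [f = c x^m] with every [m_i > 0], an
   off-diagonal entry [a_kl] is the only contribution to the monomial
   [x^(m - e_k + e_l)], so g_f is exactly the hyperplane of diagonal matrices
   orthogonal to [m].  Conversely, let g_f be an (n-1)-dimensional space of
   diagonal matrices.  If [x_k] does not occur in [f] then every [E_kl] lies in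
   g_f, which is impossible; and two distinct monomials [x^a], [x^b] of [f]
   have the same degree, hence are not proportional, so in characteristic 0
   g_f would be a proper subspace of the hyperplane orthogonal to [a]. *)

Lemma dim_lker_functional (K : fieldType) (vT wT : vectType K) (U : {vspace vT})
    (phi : 'Hom(vT, wT)) v :
  dim wT = 1%N -> v \in U -> phi v != 0 -> \dim (U :&: lker phi) = (\dim U).-1.
Proof.
move=> dim_wT Uv phi_v; have := limg_ker_dim phi U.
suff -> : \dim (phi @: U) = 1%N by rewrite addn1 => <-.
apply/eqP; rewrite eqn_leq -{1}dim_wT -dimvf dimvS ?subvf //= lt0n dimv_eq0.
by apply: contraNneq phi_v => img0; rewrite -memv0 -img0 memv_img.
Qed.

Section LieAlgebraOfPolynomials.
Local Set Implicit Arguments.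
Local Unset Strict Implicit.
Variable n : nat.

Section Multinomials.
Implicit Types (a b m : 'X_{1..n}).

(* The monomial [x^(m - e_i + e_j)] is where entry [a_ij] of [A] sends [x^m]
   under [lie_op]; off the diagonal, different entries give different ones. *)
Lemma mnm_shift_eq m (a b i j : 'I_n) : (0 < m a)%N -> a != b ->
  (U_(j) + (m - U_(i)) == U_(b) + (m - U_(a)))%MM = (i == a) && (j == b).
Proof.
move=> ma ab; apply/eqP/andP => [/mnmP eq_ij|[/eqP-> /eqP->] //].
have ba : b != a by rewrite eq_sym.
move: (eq_ij a) (eq_ij b); rewrite !mnmDE !mnmBE !mnm1E !eqxx (negbTE ab) (negbTE ba).
have [->|jb] := eqVneq j b; last by case: (i == a); case: (i == b); case: (j == a); lia.
rewrite (negbTE ba).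
by case: (i == a); case: (i == b) => //=; lia.
Qed.

Lemma mnm_cross_neq a b : mdeg a = mdeg b -> a != b ->
  exists k l, (a l * b k != a k * b l)%N.
Proof.
move=> deg_ab ab.
suff /existsP[k /existsP[l kl]] : [exists k, exists l, a l * b k != a k * b l].
  by exists k, l.
apply: contraR ab => /existsPn no_cross; apply/eqP.
have [/eqP deg0|deg_pos] := posnP (mdeg a).
  have := deg0; rewrite {1}deg_ab !mdeg_eq0 in deg0 * => /eqP-> .
  by rewrite (eqP deg0).
apply/mnmP => l; have cross k : (a l * b k = a k * b l)%N.
  by apply/eqP; move/existsPn: (no_cross k) => /(_ l); rewrite negbK.
have : (mdeg a * a l = mdeg a * b l)%N.
  rewrite [in LHS]deg_ab mulnC !mdegE big_distrr big_distrl /=.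
  by apply: eq_bigr => k _; apply: cross.
by move/eqP; rewrite eqn_pmul2l // => /eqP.
Qed.
End Multinomials.

Section MPolyCoefficients.
Variable R : comRingType.
Implicit Types (p : {mpoly R[n]}) (a b : 'X_{1..n}).

Lemma mcoeff_X_mderiv i p b : ('X_i * mderiv i p)@_b = p@_b *+ b i.
Proof.
elim/mpolyind: p => [|c m p _ _ IH]; first by rewrite mderiv0 mulr0 !mcoeff0 mul0rn.
rewrite mderivD mulrDr !mcoeffD IH mulrnDl; congr (_ + _).
rewrite mderivZ mderivX -!scalerAr -mpolyXD !mcoeffZ !mcoeffX.
have [mi0|mi_pos] := eqVneq (m i) 0%N.
  by rewrite mi0 mul0r mulr0; have [<-|_] := eqVneq m b; rewrite ?mi0 ?mulr0 ?mul0rn.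
rewrite [(U_(i) + _)%MM]addmC submK ?lep1mP //.
case: eqP => [<-|_]; last by rewrite !mulr0 mul0rn.
by rewrite mulr1n !mulr1 mulr_natr.
Qed.

Lemma msupp_mderiv_neq0 i p : mderiv i p != 0 -> exists2 b, b \in msupp p & (0 < b i)%N.
Proof.
move=> dp; apply/hasP; apply: contraR dp => /hasPn no_i; apply/eqP/mpolyP => b.
rewrite mcoeff_mderiv mcoeff0 memN_msupp_eq0 ?mul0rn //.
by apply/negP => /no_i; rewrite mnmDE mnm1E eqxx addn1.
Qed.

Lemma mpoly_msupp1 p a : {in msupp p, forall b, b = a} -> p = p@_a *: 'X_[a].
Proof.
move=> supp_a; apply/mpolyP => b; rewrite mcoeffZ mcoeffX.
have [<-|ab] := eqVneq a b; first by rewrite mulr1.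
by rewrite mulr0 memN_msupp_eq0 //; apply: contra_neqN ab => /supp_a ->.
Qed.
End MPolyCoefficients.

Section LieOperator.
Variable R : comRingType.
Implicit Types (f : {mpoly R[n]}) (A : 'M[R]_n) (d : 'rV[R]_n) (m b : 'X_{1..n}).

Definition lie_op f A : {mpoly R[n]} :=
  \sum_(i < n) \sum_(j < n) A i j *: ('X_j * mderiv i f).

Definition mnm_col m : 'cV[R]_n := \col_i (m i)%:R.

Lemma lie_op_delta f k l : lie_op f (delta_mx k l) = 'X_l * mderiv k f.
Proof.
rewrite /lie_op pair_bigA (bigD1 (k, l)) //= big1 ?addr0 => [|[i j] /= ij].
  by rewrite mxE !eqxx scale1r.
by rewrite mxE -xpair_eqE (negbTE ij) scale0r.
Qed.

Lemma mcoeff_lie_op_diag f d b :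
  (lie_op f (diag_mx d))@_b = (d *m mnm_col b) 0 0 * f@_b.
Proof.
rewrite /lie_op raddf_sum mxE mulr_suml; apply: eq_bigr => i _.
rewrite (bigD1 i) //= big1 ?addr0 => [|j ji]; last first.
  by rewrite mxE eq_sym (negbTE ji) mulr0n scale0r.
by rewrite !mxE eqxx mulr1n mcoeffZ mcoeff_X_mderiv -mulrA mulr_natl.
Qed.

Lemma mcoeff_lie_op_monomial (c : R) m A (k l : 'I_n) : (0 < m k)%N -> k != l ->
  (lie_op (c *: 'X_[m]) A)@_(U_(l) + (m - U_(k))) = c * A k l *+ m k.
Proof.
move=> mk kl; rewrite raddf_sum /=.
under eq_bigr => i _ do rewrite raddf_sum /=.
under eq_bigr => i _ do under eq_bigr => j _ do
  rewrite mderivZ mderivX -!scalerAr -mpolyXD !mcoeffZ mcoeffX mnm_shift_eq //.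
rewrite pair_bigA (bigD1 (k, l)) //= big1 ?addr0 => [|[i j] /= ij].
  by rewrite !eqxx mulr1 mulrCA mulrA mulr_natr.
by move: ij; rewrite xpair_eqE => /negbTE->; rewrite !mulr0.
Qed.
End LieOperator.

#[global] Arguments mnm_col {R}.


Section DiagonalLieAlgebra.
Variable K : fieldType.
Hypothesis K0 : [pchar K] =i pred0.
Implicit Types (f : {mpoly K[n]}) (A : 'M[K]_n) (d : 'rV[K]_n) (w : 'X_{1..n}).

Lemma eqr_nat_pchar0 p q : (p%:R == q%:R :> K) = (p == q).
Proof.
wlog le_pq : p q / (p <= q)%N.
  by move=> le; have [/le//|/ltnW/le] := leqP p q; rewrite eq_sym => ->; rewrite eq_sym.
by rewrite eq_sym -subr_eq0 -natrB // ((pcharf0P _).1 K0) subn_eq0 eqn_leq le_pq.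
Qed.

(* The diagonal matrices [diag d] with [sum_i d_i w_i = 0]. *)
Definition diag_perp w : {vspace 'M[K]_n} :=
  (linfun diag_mx @: lker (linfun (mulmxr (mnm_col w))))%VS.

Lemma diag_perpP w A :
  reflect (exists2 d, d *m mnm_col w = 0 & A = diag_mx d) (A \in diag_perp w).
Proof.
apply: (iffP memv_imgP) => [[d]|[d d_perp ->]].
  by rewrite memv_ker !lfunE /= => /eqP d_perp ->; exists d.
by exists d; rewrite ?memv_ker lfunE //= d_perp.
Qed.

Lemma dim_diag_perp w i : (w i)%:R != 0 :> K -> \dim (diag_perp w) = n.-1.
Proof.
move=> wi; rewrite limg_dim_eq; last first.
  suff /eqP-> : lker (linfun (@diag_mx K n)) == 0%VS by rewrite capv0.
  apply/lker0P => d e; rewrite !lfunE /= => de; apply/rowP => j.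
  by have := congr1 (fun A : 'M_n => A j j) de; rewrite !mxE eqxx !mulr1n.
rewrite -[lker _]capfv (@dim_lker_functional _ _ _ _ _ (delta_mx 0 i)) ?memvf //.
  by rewrite dimvf dim_matrix mul1r.
rewrite lfunE /= -rowE; apply: contraNneq wi => /(congr1 (fun M : 'M_1 => M 0 0)).
by rewrite !mxE => ->.
Qed.

Lemma lie_op_diag_eq0 f d :
  lie_op f (diag_mx d) = 0 <-> {in msupp f, forall b, d *m mnm_col b = 0}.
Proof.
split=> [f_d b fb | d_perp].
  have := congr1 (mcoeff b) f_d; rewrite mcoeff_lie_op_diag mcoeff0 => /eqP.
  rewrite mulf_eq0 [f@_b == 0]mcoeff_eq0 fb orbF => /eqP d_b.
  by apply/matrixP => i j; rewrite !ord1 d_b mxE.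
apply/mpolyP => b; rewrite mcoeff_lie_op_diag mcoeff0.
have [fb|fb] := boolP (b \in msupp f); first by rewrite d_perp // mxE mul0r.
by rewrite memN_msupp_eq0 // mulr0.
Qed.

Lemma lie_op_monomial_eq0 (c : K) w A : c != 0 -> (forall i, 0 < w i)%N ->
  lie_op (c *: 'X_[w]) A = 0 <-> A \in diag_perp w.
Proof.
move=> c0 w_pos; have supp_w : msupp (c *: 'X_[w]) = [:: w] := msuppMCX _ c0.
split=> [A_lie | /diag_perpP[d d_perp ->]]; last first.
  by apply/lie_op_diag_eq0 => b; rewrite supp_w mem_seq1 => /eqP->.
have /diag_mxP[d dA] : is_diag_mx A.
  apply/is_diag_mxP => k l; rewrite val_eqE => kl.
  have := congr1 (mcoeff (U_(l) + (w - U_(k)))) A_lie.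
  rewrite mcoeff_lie_op_monomial // mcoeff0 -mulr_natr => /eqP.
  by rewrite !mulf_eq0 (negbTE c0) ((pcharf0P _).1 K0) (gtn_eqF (w_pos k)) orbF => /eqP.
rewrite dA in A_lie *; apply/diag_perpP; exists d => //.
by apply: ((lie_op_diag_eq0 _ _).1 A_lie w); rewrite supp_w mem_seq1.
Qed.

Lemma lie_alg_diag_codim1_mderiv f k : lie_alg_diag_codim1 f -> mderiv k f != 0.
Proof.
case=> V [memV [dimV diagV]]; apply/negP => /eqP f_k.
have delta_V l : delta_mx k l \in V.
  by apply/memV; rewrite /in_lie_alg -/(lie_op f _) lie_op_delta f_k mulr0.
have delta_k l : l = k.
  apply/eqP; apply: contraTT (diagV _ (delta_V l)) => lk; apply/is_diag_mxP.
  by move=> /(_ k l); rewrite mxE !eqxx val_eqE eq_sym lk => /(_ isT)/eqP; rewrite oner_eq0.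
have n1 : n = 1%N.
  by rewrite -(card_ord n); apply: (eq_card1 (x := k)) => j; rewrite (delta_k j) !inE eqxx.
have V0 : V = 0%VS by apply/eqP; rewrite -dimv_eq0 dimV n1.
have := delta_V k; rewrite V0 memv0 => /eqP/matrixP/(_ k k)/eqP.
by rewrite !mxE !eqxx oner_eq0.
Qed.

Lemma lie_alg_diag_codim1_msupp f (deg : nat) :
  f \is deg.-homog -> lie_alg_diag_codim1 f -> {in msupp f &, forall a b, a = b}.
Proof.
move=> /dhomogP f_hom [V [memV [dimV diagV]]] a b fa fb.
apply/eqP; apply: contraT => ab.
have [k [l kl]] := mnm_cross_neq (etrans (f_hom a fa) (esym (f_hom b fb))) ab.
pose e : 'rV[K]_n := (a l)%:R *: delta_mx 0 k - (a k)%:R *: delta_mx 0 l.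
have e_col w : (e *m mnm_col w) 0 0 = (a l * w k)%:R - (a k * w l)%:R.
  by rewrite mulmxBl -!scalemxAl -!rowE !mxE !natrM.
have V_perp : (V <= diag_perp a)%VS.
  apply/subvP => A VA; have /diag_mxP[g gA] := diagV A VA.
  apply/diag_perpP; exists g => //; apply: ((lie_op_diag_eq0 _ _).1 _ a fa).
  by rewrite -gA; apply/memV.
have e_perp : diag_mx e \in diag_perp a.
  by apply/diag_perpP; exists e => //; apply/matrixP => i j; rewrite !ord1 e_col mulnC subrr mxE.
have e_notin_V : diag_mx e \notin V.
  apply/negP => /memV/lie_op_diag_eq0/(_ b fb)/(congr1 (fun M : 'M_1 => M 0 0)).
  by rewrite e_col mxE => /eqP; rewrite subr_eq0 eqr_nat_pchar0 (negbTE kl).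
have [i ai] : exists i, (a i)%:R != 0 :> K.
  have [al0|] := eqVneq (a l) 0%N; last by exists l; rewrite ((pcharf0P _).1 K0).
  by exists k; rewrite ((pcharf0P _).1 K0); apply: contraNneq kl => ak0; rewrite al0 ak0.
have := dimv_leqif_eq V_perp; rewrite dimV (dim_diag_perp ai).
move/ltn_leqif; rewrite ltnn => /esym/negbFE/eqP V_eq.
by rewrite V_eq e_perp in e_notin_V.
Qed.

End DiagonalLieAlgebra.

#[global] Arguments diag_perp {K}.

End LieAlgebraOfPolynomials.

Theorem proposition5 (K : fieldType) (n d : nat) (f : {mpoly K[n]}) :
  [pchar K] =i pred0 -> (0 < n)%N -> f \is d.-homog ->
  (full_monomial f <-> lie_alg_diag_codim1 f).
Proof.
move=> K0 n_gt0 f_hom; split.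
- case=> c [m [c0 [m_pos ->]]]; exists (diag_perp m); split; [|split].
  + by move=> A; apply: iff_sym; apply: lie_op_monomial_eq0.
  + by apply: (@dim_diag_perp _ _ m (Ordinal n_gt0)); rewrite ((pcharf0P _).1 K0) -lt0n m_pos.
  + by move=> A /diag_perpP[e _ ->]; apply: diag_mx_is_diag.
- move=> f_lie; have supp_eq := lie_alg_diag_codim1_msupp K0 f_hom f_lie.
  have [a fa _] := msupp_mderiv_neq0 (lie_alg_diag_codim1_mderiv (Ordinal n_gt0) f_lie).
  exists f@_a, a; split; first by rewrite -mcoeff_msupp.
  split; last by apply: mpoly_msupp1 => b fb; apply: supp_eq.
  move=> i; have [b fb b_i] := msupp_mderiv_neq0 (lie_alg_diag_codim1_mderiv i f_lie).
  by rewrite -(supp_eq b a fb fa).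
Qed.
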